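(* Let $q\in\mathbb{C}[x_0,\dots,x_3]_2$ be a quadratic form of rank four, let $[l_1],[l_2]\in\mathbb{P}(S_1)$ and assume that $q_{l_1}(l_2^2)=0$ (equivalently $q_{l_2}(l_1^2)=0$). Then $p_{l_2}(l_1)=p_{l_1}(l_2)=0$ if and only if $[l_1]\in Q^{-1}$ or $[l_2]\in Q^{-1}$.
   Context: $S=\mathbb{C}[x_0,\dots,x_3]$, $T=\mathbb{C}[y_0,\dots,y_3]$; $T$ acts on $S$ and $S$ acts on $T$ by differentiation. For $l\in S_1$, $q_l\in T_2$ is the unique form with $q_l(q^2)=l^2$. $q^{-1}\in T_2$ is the inverse quadric (the quadric with $S_1\to T_1$, $l\mapsto l(q^{-1})$, inverse to $T_1\to S_1$, $g\mapsto g(q)$), $Q^{-1}=\{q^{-1}=0\}$, and $p_l=l(q^{-1})\in T_1$ (so $p_{l_2}(l_1)\in\mathbb{C}$ is $p_{l_2}$ applied to $l_1$). *)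

From HB Require Import structures.
From mathcomp Require Import all_boot all_order all_algebra.
From mathcomp Require Import mpoly.
From mathcomp Require Import complex.
From Stdlib Require Import ClassicalEpsilon.
Set Implicit Arguments. Unset Strict Implicit. Unset Printing Implicit Defensive.
Import Order.TTheory GRing.Theory Num.Theory.
Local Open Scope ring_scope.

Section Apolarity.
Variable K : fieldType.

(* Both S = K[x_0..x_3] and T = K[y_0..y_3] are modelled by {mpoly K[4]};
   the variable x_i of S is dual to the variable y_i of T. *)
Definition poly4 := {mpoly K[4]}.

(* Action of g by differentiation on f:  g(f) = g(d/dz_0,...,d/dz_3) f.
   Used both for T acting on S and for S acting on T. *)
Definition apolar (g f : {mpoly K[4]}) : {mpoly K[4]} :=
  \sum_(m <- msupp g) g@_m *: (f^`M[m]).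

Definition hessian (q : {mpoly K[4]}) : 'M[K]_4 :=
  \matrix_(i < 4, j < 4) ((q^`M(i))^`M(j))@_0.

Definition quad_rank4 (q : {mpoly K[4]}) : Prop :=
  q \is 2.-homog /\ \rank (hessian q) = 4%N.

Definition q_l (q l : {mpoly K[4]}) : {mpoly K[4]} :=
  epsilon (inhabits 0)
    (fun g : {mpoly K[4]} => g \is 2.-homog /\ apolar g (q ^+ 2) = l ^+ 2).

Definition qinv (q : {mpoly K[4]}) : {mpoly K[4]} :=
  epsilon (inhabits 0)
    (fun g : {mpoly K[4]} => g \is 2.-homog /\
       (forall l : {mpoly K[4]}, l \is 1.-homog -> apolar (apolar l g) q = l) /\
       (forall h : {mpoly K[4]}, h \is 1.-homog -> apolar (apolar h q) g = h)).

Definition p_l (q l : {mpoly K[4]}) : {mpoly K[4]} := apolar l (qinv q).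

(* [l] in Q^{-1} = {q^{-1} = 0}: q^{-1} vanishes at the point of P(S_1)
   with coordinates (coefficients of l in the basis x_0..x_3, dual to y_i). *)
Definition in_Qinv (q l : {mpoly K[4]}) : Prop :=
  (qinv q).@[fun i => l@_U_(i)] = 0.

End Apolarity.

From HB Require Import structures.
From mathcomp Require Import all_boot all_order all_algebra.
From mathcomp Require Import mpoly ssrcomplements complex ring.
From Stdlib Require Import ClassicalEpsilon.
Set Implicit Arguments. Unset Strict Implicit. Unset Printing Implicit Defensive.
Import Order.TTheory GRing.Theory Num.Theory.
Local Open Scope ring_scope.

(* Write l1 = u.x, l2 = v.x, let H be the Hessian of q and G = H^-1. In these
   coordinates q^-1 = y G y^T / 2, so p_l2(l1) = p_l1(l2) = s := u G v^T and
   [l] lies in Q^-1 iff u G u^T = 0. Solving g(q^2) = l1^2 for g in T_2 gives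
   q_l1 = (G u^T u G - (u G u^T / 6) G) / 2, whence
   q_l1(l2^2) = s^2 - (u G u^T)(v G v^T) / 6. Under the hypothesis
   q_l1(l2^2) = 0, s vanishes iff u G u^T or v G v^T does. *)

Lemma epsilon_iff (A : Type) (i : inhabited A) (P : A -> Prop) (a : A) :
  (forall b, P b <-> b = a) -> epsilon i P = a.
Proof. by move=> Pa; apply/Pa; apply: epsilon_spec; exists a; apply/Pa. Qed.

Lemma sqr_eq0_iff (K : fieldType) (d s a b : K) :
  d != 0 -> s ^+ 2 = a * b / d -> s = 0 <-> a = 0 \/ b = 0.
Proof.
move=> d0 sE; split=> [s0|ab0].
  move: sE; rewrite s0 expr0n /= => /esym/eqP.
  by rewrite !mulf_eq0 invr_eq0 (negbTE d0) orbF => /orP[]/eqP; [left|right].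
have : s ^+ 2 == 0 by rewrite sE; case: ab0 => ->; rewrite ?(mul0r, mulr0).
by rewrite expf_eq0 => /eqP.
Qed.

Lemma mdeg2_mnm1D n (m : 'X_{1..n}) :
  mdeg m = 2%N -> exists a b, m = (U_(a) + U_(b))%MM.
Proof.
move=> m2; have [a ma] : exists a, (0 < m a)%N.
  apply/existsP; apply: contraT; rewrite negb_exists => /forallP m0.
  by move: m2; rewrite mdegE big1 // => i _; apply/eqP; rewrite -leqn0 leqNgt m0.
have Ua_le : (U_(a) <= m)%MM by apply/mnm_lepP => i; rewrite mnm1E; case: eqP => [<-|].
have /mdeg1P [b /eqP mb] : mdeg (m - U_(a))%MM == 1%N.
  by move: m2; rewrite -{1}(submK Ua_le) mdegD mdeg1 addn1 => -[->].
by exists b, a; rewrite -mb submK.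
Qed.

Section MatrixForms.
Variables (R : comPzSemiRingType) (n : nat).
Implicit Types (M : 'M[R]_n) (u v : 'rV[R]_n).

Lemma sum_delta (F : 'I_n -> R) k : \sum_i F i * (i == k)%:R = F k.
Proof.
rewrite (bigD1 k) //= eqxx mulr1 big1 ?addr0 // => i /negbTE ->.
by rewrite mulr0.
Qed.

Lemma mx11_mulE (a b : 'M[R]_1) : (a *m b) 0 0 = a 0 0 * b 0 0.
Proof. by rewrite mxE big_ord1. Qed.

Lemma mxform_trmx M u v : (u *m M *m v^T) 0 0 = (v *m M^T *m u^T) 0 0.
Proof.
have -> : v *m M^T *m u^T = (u *m M *m v^T)^T by rewrite !trmx_mul trmxK mulmxA.
by rewrite [RHS]mxE.
Qed.

Lemma mxtrace_mul_sqr M v : \tr (M *m (v^T *m v)) = (v *m M *m v^T) 0 0.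
Proof. by rewrite mulmxA mxtrace_mulC mulmxA /mxtrace big_ord1. Qed.

Lemma mxtrace_mul_trmx (A B : 'M[R]_n) :
  \tr (A *m B^T) = \sum_i \sum_j A i j * B i j.
Proof.
by apply: eq_bigr => i _; rewrite mxE; apply: eq_bigr => j _; rewrite mxE.
Qed.

Lemma trmx_addT M : (M + M^T)^T = M + M^T.
Proof. by rewrite linearD /= trmxK addrC. Qed.

Lemma sum_row_outer (A S : 'M[R]_n) :
  \sum_i \sum_j A i j *: ((row i S)^T *m row j S) = S^T *m A *m S.
Proof.
apply/matrixP => k l; rewrite !summxE; under eq_bigr => i _ do rewrite summxE.
rewrite mxE; under [RHS]eq_bigr => j _ do rewrite mxE mulr_suml.
rewrite exchange_big; apply: eq_bigr => i _; apply: eq_bigr => j _.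
by rewrite !mxE big_ord1 !mxE mulrA [A j i * _]mulrC.
Qed.
End MatrixForms.

Section QlMatrixEquation.
Variables (K : fieldType) (n : nat) (H G : 'M[K]_n) (V : 'rV[K]_n).
Hypotheses (GH : G *m H = 1%:M) (HG : H *m G = 1%:M).
Hypotheses (two_neq0 : 2%:R != 0 :> K) (n2_neq0 : n.+2%:R != 0 :> K).

Let mxtrace_sqr_inv : \tr (G *m (V^T *m V) *m G *m H) = (V *m G *m V^T) 0 0.
Proof. by rewrite -mulmxA GH mulmx1 mxtrace_mul_sqr. Qed.

(* For q = qform (H / 2), g = qform B and l = linform V, the equation
   g(q^2) = l^2 reads as below (apolar_qform_sqr_half); the constant n + 2
   comes from taking the trace against H. *)
Lemma ql_mx_equationP B (c := (V *m G *m V^T) 0 0) :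
  H *m B *m H *+ 2 + \tr (B *m H) *: H = V^T *m V <->
  B = 2^-1 *: (G *m (V^T *m V) *m G - (c / n.+2%:R) *: G).
Proof.
have conjK M : H *m (G *m M *m G) *m H = M.
  by rewrite !mulmxA HG mul1mx -mulmxA GH mulmx1.
have n2E : n.+2%:R = n%:R + 2%:R :> K by rewrite -addn2 natrD.
set t := \tr (B *m H); set X := G *m (V^T *m V) *m G; set s := c / n.+2%:R.
have conjE : G *m (H *m B *m H *+ 2 + t *: H) *m G = B *+ 2 + t *: G.
  rewrite -!scaler_nat mulmxDr mulmxDl -!scalemxAr -!scalemxAl !mulmxA GH mul1mx.
  by rewrite mul1mx -mulmxA HG mulmx1.
have -> : H *m B *m H *+ 2 + t *: H = V^T *m V <-> B *+ 2 + t *: G = X.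
  split=> [E|E]; first by rewrite /X -E conjE.
  by rewrite -[LHS]conjK conjE E conjK.
split=> [E|BE].
  have tE : t = s.
    have /(congr1 (fun M => \tr (M *m H))) := E.
    rewrite mulmxDl mxtraceD -scaler_nat -!scalemxAl !mxtraceZ GH mxtrace1.
    rewrite mxtrace_sqr_inv -/t => tc.
    by rewrite /s /c -tc n2E; field; rewrite -n2E n2_neq0.
  by rewrite -tE -E addrK -scaler_nat scalerA mulVf ?scale1r.
have tE : t = s.
  rewrite /t BE -scalemxAl mxtraceZ mulmxBl raddfB /= -scalemxAl mxtraceZ.
  rewrite GH mxtrace1 mxtrace_sqr_inv /s /c n2E.
  by field; rewrite -n2E n2_neq0 two_neq0.
rewrite tE BE -scaler_nat scalerA.
have -> : 2%:R * 2^-1 = 1 :> K by field.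
by rewrite scale1r subrK.
Qed.
End QlMatrixEquation.

Section ApolarCoordinates.
Variable K : fieldType.
Notation P := {mpoly K[4]}.

Lemma apolar_bounded (g f : P) k : (msize g <= k)%N ->
  apolar g f = \sum_(m : 'X_{1..4 < k}) g@_m *: f^`M[m].
Proof.
move=> le_gk; rewrite /apolar (big_mksub 'X_{1..4 < k}) /=; first last.
- by move=> m /msize_mdeg_lt/leq_trans/(_ le_gk).
- exact: msupp_uniq.
rewrite big_rmcond //= => m /memN_msupp_eq0 ->.
by rewrite scale0r.
Qed.

Definition apolar_on (f g : P) := apolar g f.

Lemma apolar_on_is_linear f : linear (apolar_on f).
Proof.
move=> c g h; rewrite /apolar_on.
pose k := (msize g + msize h + msize (c *: g + h))%N.
rewrite !(@apolar_bounded _ _ k) /k; first last.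
- by rewrite leq_addl.
- by rewrite -addnA leq_addr.
- by rewrite -addnA addnCA leq_addr.
rewrite scaler_sumr -big_split /=; apply/eq_bigr=> m _.
by rewrite mcoeffD mcoeffZ scalerDl scalerA.
Qed.

HB.instance Definition _ f :=
  GRing.isLinear.Build K P P _ (apolar_on f) (apolar_on_is_linear f).

Lemma apolarX (m : 'X_{1..4}) (f : P) : apolar 'X_[m] f = f^`M[m].
Proof. by rewrite /apolar msuppX big_seq1 mcoeffX eqxx scale1r. Qed.

Definition linform (u : 'rV[K]_4) : P := \sum_i u 0 i *: 'X_i.
Definition qform (M : 'M[K]_4) : P := \sum_i \sum_j M i j *: ('X_i * 'X_j).
Definition coords (l : P) : 'rV[K]_4 := \row_i l@_U_(i).

Lemma linform_is_linear : linear linform.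
Proof.
move=> a u v; rewrite /linform scaler_sumr -big_split; apply: eq_bigr => i _.
by rewrite !mxE scalerDl scalerA.
Qed.
HB.instance Definition _ := GRing.isLinear.Build K _ P _ linform linform_is_linear.

Lemma qform_is_linear : linear qform.
Proof.
move=> a M N; rewrite /qform scaler_sumr -big_split; apply: eq_bigr => i _.
rewrite scaler_sumr -big_split; apply: eq_bigr => j _.
by rewrite !mxE scalerDl scalerA.
Qed.
HB.instance Definition _ := GRing.isLinear.Build K _ P _ qform qform_is_linear.

Lemma apolar_linform u (f : P) : apolar (linform u) f = \sum_i u 0 i *: f^`M(i).
Proof.
rewrite -[apolar _ _]/(apolar_on f _) linear_sum; apply: eq_bigr => i _.
by rewrite linearZ /= /apolar_on -mderivmU1m apolarX.
Qed.

Lemma apolar_qform M (f : P) :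
  apolar (qform M) f = \sum_i \sum_j M i j *: f^`M(i)^`M(j).
Proof.
rewrite -[apolar _ _]/(apolar_on f _) linear_sum; apply: eq_bigr => i _.
rewrite linear_sum; apply: eq_bigr => j _.
by rewrite linearZ /= /apolar_on -mpolyXD apolarX mderivmDm !mderivmU1m.
Qed.

Lemma mderivXU i k : ('X_i : P)^`M(k) = (i == k)%:R%:MP.
Proof.
rewrite mderivX mnm1E; case: eqP => [->|_]; last by rewrite scale0r.
have -> : (U_(k) - U_(k))%MM = 0%MM by apply/mnmP => j; rewrite !mnmE subnn.
by rewrite mpolyX0 scale1r.
Qed.

Lemma mcoeff_linform u k : (linform u)@_U_(k) = u 0 k.
Proof.
rewrite /linform raddf_sum /= -[RHS](sum_delta (u 0) k); apply: eq_bigr => i _.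
by rewrite mcoeffZ mcoeffXU.
Qed.

Lemma mderiv_linform u k : (linform u)^`M(k) = (u 0 k)%:MP.
Proof.
rewrite /linform raddf_sum /=.
under eq_bigr => i _ do rewrite mderivZ mderivXU -mul_mpolyC -mpolyCM.
by rewrite -raddf_sum /= sum_delta.
Qed.

Lemma mderiv_qform M k : (qform M)^`M(k) = linform (row k (M + M^T)).
Proof.
rewrite /qform /linform !raddf_sum /=.
under eq_bigr => i _ do rewrite raddf_sum /=.
under eq_bigr => i _ do under eq_bigr => j _ do
  rewrite mderivZ mderivM !mderivXU mul_mpolyC [_ * _%:MP]mulrC mul_mpolyC
          scalerDr !scalerA.
under eq_bigr => i _ do rewrite big_split /=.
under [RHS]eq_bigr => j _ do rewrite !mxE scalerDl.
rewrite !big_split /=; congr (_ + _).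
  rewrite exchange_big /=; apply: eq_bigr => j _.
  by rewrite -scaler_suml (sum_delta (M^~ j)).
by apply: eq_bigr => i _; rewrite -scaler_suml sum_delta.
Qed.

Lemma mderiv2_qform M i j : (qform M)^`M(i)^`M(j) = ((M + M^T) i j)%:MP.
Proof. by rewrite mderiv_qform mderiv_linform mxE. Qed.

Lemma mderiv2_sqr (f : P) i j :
  (f ^+ 2)^`M(i)^`M(j) = 2%:R *: (f * f^`M(i)^`M(j) + f^`M(i) * f^`M(j)).
Proof.
rewrite expr2 !(mderivM, mderivD) -mul_mpolyC rmorph_nat mderiv_comm; ring.
Qed.

Lemma linform_mul u v : linform u * linform v = qform (u^T *m v).
Proof.
rewrite /linform /qform mulr_suml; apply: eq_bigr => i _.
rewrite mulr_sumr; apply: eq_bigr => j _.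
by rewrite -scalerAl -scalerAr scalerA !mxE big_ord1 !mxE.
Qed.

Lemma apolar_linform_linform u v :
  apolar (linform u) (linform v) = ((u *m v^T) 0 0)%:MP.
Proof.
rewrite apolar_linform mxE raddf_sum /=; apply: eq_bigr => i _.
by rewrite mderiv_linform -mul_mpolyC -mpolyCM mxE.
Qed.

Lemma apolar_linform_qform u M :
  apolar (linform u) (qform M) = linform (u *m (M + M^T)).
Proof.
rewrite apolar_linform mulmx_sum_row linear_sum /=; apply: eq_bigr => i _.
by rewrite mderiv_qform linearZ.
Qed.

Lemma apolar_qform_qform A M :
  apolar (qform A) (qform M) = (\tr (A *m (M + M^T)))%:MP.
Proof.
rewrite apolar_qform -trmx_addT mxtrace_mul_trmx rmorph_sum.
apply: eq_bigr => i _; rewrite rmorph_sum; apply: eq_bigr => j _.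
by rewrite mderiv2_qform -mul_mpolyC -mpolyCM.
Qed.

Lemma apolar_qform_sqr A M (S := M + M^T) :
  apolar (qform A) (qform M ^+ 2) = qform ((S *m A *m S + \tr (A *m S) *: M) *+ 2).
Proof.
have summandE i j : A i j *: (2%:R *: (qform M * (S i j)%:MP +
        qform ((row i S)^T *m row j S))) =
    qform (2%:R *: (A i j *: ((S i j) *: M + (row i S)^T *m row j S))).
  rewrite [qform (2%:R *: _)]linearZ /= [qform (A i j *: _)]linearZ /=.
  rewrite [qform (_ + _)]linearD /= [qform (_ *: M)]linearZ /=.
  by rewrite mulrC mul_mpolyC !scalerA mulrC.
rewrite apolar_qform.
under eq_bigr => i _ do under eq_bigr => j _ do
  rewrite mderiv2_sqr mderiv2_qform !mderiv_qform linform_mul summandE.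
under eq_bigr => i _ do rewrite -linear_sum.
rewrite -linear_sum /=.
congr qform; under eq_bigr => i _ do rewrite -scaler_sumr.
rewrite -scaler_sumr scaler_nat; congr (_ *+ 2).
under eq_bigr => i _ do under eq_bigr => j _ do rewrite scalerDr scalerA.
under eq_bigr => i _ do rewrite big_split /=.
rewrite big_split /= sum_row_outer trmx_addT addrC; congr (_ + _).
have ST : S^T = S := trmx_addT M.
rewrite -{2}[S]ST mxtrace_mul_trmx scaler_suml; apply: eq_bigr => i _.
by rewrite scaler_suml.
Qed.

Lemma hessian_qform M : hessian (qform M) = M + M^T.
Proof. by apply/matrixP => i j; rewrite mxE mderiv2_qform mcoeffC eqxx mulr1. Qed.

Lemma hessian_is_linear : linear (@hessian K).
Proof.
by move=> a p r; apply/matrixP => i j; rewrite !mxE !(mderivD, mderivZ) mcoeffD mcoeffZ.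
Qed.
HB.instance Definition _ := GRing.isLinear.Build K P _ _ (@hessian K) hessian_is_linear.

Lemma trmx_hessian (p : P) : (hessian p)^T = hessian p.
Proof. by apply/matrixP => i j; rewrite !mxE mderiv_comm. Qed.

Lemma meval_qform M (u : 'rV_4) :
  (qform M).@[fun i => u 0 i] = (u *m M *m u^T) 0 0.
Proof.
rewrite /qform !mxE rmorph_sum; under eq_bigr do rewrite rmorph_sum.
rewrite exchange_big; apply: eq_bigr => j _.
rewrite !mxE mulr_suml; apply: eq_bigr => i _.
by rewrite /= mevalZ mevalM !mevalXU ?mxE mulrA [M i j * _]mulrC.
Qed.

Lemma linform_homog u : linform u \is 1.-homog.
Proof. by apply: rpred_sum => i _; apply: rpredZ; rewrite dhomogX /= mdeg1. Qed.

Lemma qform_homog M : qform M \is 2.-homog.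
Proof.
apply: rpred_sum => i _; apply: rpred_sum => j _; apply: rpredZ.
by rewrite -mpolyXD dhomogX /= mdegD !mdeg1.
Qed.

Lemma linform_coords (l : P) : l \is 1.-homog -> linform (coords l) = l.
Proof.
move=> l1; apply/mpolyP => m.
have [/mdeg1P [i /eqP ->]|m_ne1] := boolP (mdeg m == 1%N).
  by rewrite mcoeff_linform mxE.
by rewrite (dhomog_nemf_coeff l1) ?(dhomog_nemf_coeff (linform_homog _)).
Qed.

Lemma linform_inj : injective linform.
Proof.
by move=> u v uv; apply/rowP => i; rewrite -!mcoeff_linform uv.
Qed.

Lemma trmx_invmx_hessian (p : P) : (invmx (hessian p))^T = invmx (hessian p).
Proof. by rewrite trmx_inv trmx_hessian. Qed.

Hypothesis two_neq0 : 2%:R != 0 :> K.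

Lemma hessian_eq0 (p : P) : p \is 2.-homog -> hessian p = 0 -> p = 0.
Proof.
move=> p2 /matrixP hp0; apply/mpolyP => m; rewrite mcoeff0.
have [/eqP m2|] := boolP (mdeg m == 2%N); last exact: dhomog_nemf_coeff.
have [a [b ->]] := mdeg2_mnm1D m2.
move: (hp0 b a); rewrite !mxE mcoeff_deriv add0m mcoeff_deriv mnm0E mulr1n.
rewrite -mulr_natr => /eqP; rewrite mulf_eq0 => /orP [/eqP //|].
by rewrite mnm1E; case: (a == b); rewrite ?(negbTE two_neq0) ?oner_eq0.
Qed.

Lemma scale_half_addT n (C : 'M[K]_n) :
  C^T = C -> 2^-1 *: C + (2^-1 *: C)^T = C.
Proof.
move=> CT; rewrite linearZ /= CT -scalerDl.
have -> : 2^-1 + 2^-1 = 1 :> K by field.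
by rewrite scale1r.
Qed.

Lemma qform_hessian (p : P) : p \is 2.-homog -> p = qform (2^-1 *: hessian p).
Proof.
move=> p2; apply/eqP; rewrite -subr_eq0; apply/eqP/hessian_eq0.
  by rewrite rpredB ?qform_homog.
by rewrite linearB /= hessian_qform scale_half_addT ?trmx_hessian // subrr.
Qed.

Lemma qform_inj_sym M N : M^T = M -> N^T = N -> qform M = qform N -> M = N.
Proof.
move=> MT NT /(congr1 (@hessian K)); rewrite !hessian_qform MT NT -!mulr2n.
by rewrite -!scaler_nat; apply: scalerI.
Qed.

Lemma apolar_linform_qform_half u C : C^T = C ->
  apolar (linform u) (qform (2^-1 *: C)) = linform (u *m C).
Proof. by move=> CT; rewrite apolar_linform_qform scale_half_addT. Qed.

Lemma apolar_qform_sqr_half A C : C^T = C ->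
  apolar (qform A) (qform (2^-1 *: C) ^+ 2) =
  qform (C *m A *m C *+ 2 + \tr (A *m C) *: C).
Proof.
move=> CT; rewrite apolar_qform_sqr scale_half_addT // mulrnDl; congr (qform (_ + _)).
by rewrite -scaler_nat !scalerA; congr (_ *: _); field.
Qed.
End ApolarCoordinates.

Section RankFour.
Variables (K : fieldType) (q : {mpoly K[4]}).
Hypotheses (q4 : quad_rank4 q) (six_neq0 : 6%:R != 0 :> K).
Local Notation H := (hessian q).
Local Notation G := (invmx (hessian q)).

Let two_neq0 : 2%:R != 0 :> K.
Proof. by move: six_neq0; rewrite (natrM K 2 3) mulf_eq0 negb_or => /andP[]. Qed.

Let H_unit : H \in unitmx.
Proof. by case: q4 => _ rk; rewrite -row_free_unit /row_free rk. Qed.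

Let GH : G *m H = 1%:M. Proof. exact: mulVmx. Qed.
Let HG : H *m G = 1%:M. Proof. exact: mulmxV. Qed.

Let qE : q = qform (2^-1 *: H).
Proof. by case: q4 => q2 _; apply: qform_hessian. Qed.

Let apolar_linform_q u : apolar (linform u) q = linform (u *m H).
Proof. by rewrite [X in apolar _ X]qE apolar_linform_qform_half ?trmx_hessian. Qed.

Lemma qinvE : qinv q = qform (2^-1 *: G).
Proof.
apply: epsilon_iff => g; split=> [[g2 [_ inv_g]]|->].
  have HC : H *m hessian g = 1%:M.
    apply/eqP/mulmxP => u; rewrite mulmx1 mulmxA; apply: linform_inj.
    have := inv_g _ (linform_homog u).
    rewrite apolar_linform_q [X in apolar _ X](qform_hessian two_neq0 g2).
    by rewrite apolar_linform_qform_half ?trmx_hessian.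
  by rewrite (qform_hessian two_neq0 g2) -[hessian g](mulKmx H_unit) HC mulmx1.
split; first exact: qform_homog.
split=> l /linform_coords <-.
  rewrite apolar_linform_qform_half ?trmx_invmx_hessian // apolar_linform_q.
  by rewrite -mulmxA GH mulmx1.
rewrite apolar_linform_q apolar_linform_qform_half ?trmx_invmx_hessian //.
by rewrite -mulmxA HG mulmx1.
Qed.

Lemma q_l_linform V (c := (V *m G *m V^T) 0 0) :
  q_l q (linform V) = qform (2^-1 *: (G *m (V^T *m V) *m G - (c / 6%:R) *: G)).
Proof.
set B0 := 2^-1 *: _.
have B0T : B0^T = B0.
  rewrite /B0 linearZ /= linearB /= linearZ /= !trmx_mul trmxK.
  by rewrite (trmx_invmx_hessian q) mulmxA.
have solE B : B^T = B -> apolar (qform B) (q ^+ 2) = linform V ^+ 2 <-> B = B0.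
  move=> BT; rewrite [X in apolar _ (X ^+ 2)]qE apolar_qform_sqr_half ?trmx_hessian //.
  rewrite expr2 linform_mul -(ql_mx_equationP V GH HG two_neq0 six_neq0 B).
  set X := H *m B *m H *+ 2 + \tr (B *m H) *: H.
  have XT : X^T = X.
    by rewrite linearD linearZ /= raddfMn /= !trmx_mul BT trmx_hessian mulmxA.
  have VVT : (V^T *m V)^T = V^T *m V by rewrite trmx_mul trmxK.
  by split=> [/(qform_inj_sym two_neq0 XT VVT)|->].
apply: epsilon_iff => g; split=> [[g2 gE]|->]; last first.
  by split; [exact: qform_homog | apply/solE].
have halfCT : (2^-1 *: hessian g)^T = 2^-1 *: hessian g.
  by rewrite linearZ /= trmx_hessian.
rewrite (qform_hessian two_neq0 g2); congr qform; apply/(solE _ halfCT).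
by rewrite -qform_hessian.
Qed.

Lemma apolar_p_l u v :
  apolar (p_l q (linform v)) (linform u) = ((v *m G *m u^T) 0 0)%:MP.
Proof.
rewrite /p_l qinvE apolar_linform_qform_half ?trmx_invmx_hessian //.
exact: apolar_linform_linform.
Qed.

Lemma in_Qinv_linform u : in_Qinv q (linform u) <-> (u *m G *m u^T) 0 0 = 0.
Proof.
rewrite /in_Qinv qinvE (meval_eq _ (mcoeff_linform u)) meval_qform -scalemxAr.
rewrite -scalemxAl mxE; split=> [/eqP|->]; last exact: mulr0.
by rewrite mulf_eq0 invr_eq0 (negbTE two_neq0) => /eqP.
Qed.

Lemma apolar_q_l_sqr u v :
  apolar (q_l q (linform u)) (linform v ^+ 2) =
  (((u *m G *m v^T) 0 0) ^+ 2 - (u *m G *m u^T) 0 0 * (v *m G *m v^T) 0 0 / 6%:R)%:MP.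
Proof.
rewrite q_l_linform expr2 linform_mul apolar_qform_qform trmx_mul trmxK -mulr2n.
rewrite -scaler_nat -scalemxAr mxtraceZ -scalemxAl mxtraceZ (mulVKf two_neq0).
rewrite mulmxBl raddfB /= -scalemxAl mxtraceZ !mxtrace_mul_sqr.
have -> : v *m (G *m (u^T *m u) *m G) *m v^T = (v *m G *m u^T) *m (u *m G *m v^T).
  by rewrite !mulmxA.
by rewrite mx11_mulE (mxform_trmx G v u) (trmx_invmx_hessian q) expr2 mulrAC.
Qed.
End RankFour.

Unset Implicit Arguments.

Theorem lemma4p11 (R : rcfType) (q l1 l2 : {mpoly R[i][4]}) :
  quad_rank4 q ->
  l1 \is 1.-homog -> l1 != 0 ->
  l2 \is 1.-homog -> l2 != 0 ->
  apolar (q_l q l1) (l2 ^+ 2) = 0 ->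
  (apolar (p_l q l2) l1 = 0 /\ apolar (p_l q l1) l2 = 0) <->
  (in_Qinv q l1 \/ in_Qinv q l2).
Proof.
move=> q4 /linform_coords <- _ /linform_coords <- _.
have six_neq0 : 6%:R != 0 :> R[i] by rewrite pnatr_eq0.
set u := coords l1; set v := coords l2.
rewrite (apolar_q_l_sqr q4 six_neq0) !(apolar_p_l q4 six_neq0).
rewrite (mxform_trmx _ v u) trmx_invmx_hessian.
move=> /eqP; rewrite mpolyC_eq0 subr_eq0 => /eqP /(sqr_eq0_iff six_neq0) s0E.
rewrite !(in_Qinv_linform q4 six_neq0) -s0E.
split=> [[/eqP + _]|->]; last by rewrite mpolyC0.
by rewrite mpolyC_eq0 => /eqP.
Qed.
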